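(* Let $\mathbb Y=\mathbb R^m$, $g\colon\mathbb X\to\mathbb R^m$ twice continuously differentiable, $D\subset\mathbb R^m$ closed and polyhedral locally around $g(\bar x)$, $\Phi(x):=g(x)-D$, $(\bar x,0)\in\operatorname{gph}\Phi$, $u\in\mathbb S_{\mathbb X}$, and assume SOSCMS$(u)$: every $y^*\in\mathcal N_D(g(\bar x);\nabla g(\bar x)u)$ with $\nabla g(\bar x)^*y^*=0$ and $\nabla^2\langle y^*,g\rangle(\bar x)[u,u]\ge0$ satisfies $y^*=0$. Let $K:=\mathcal N_{\mathcal T_D(g(\bar x))}(\nabla g(\bar x)u)$, $\mathbf T(u):=\mathcal T_{\mathcal T_D(g(\bar x))}(\nabla g(\bar x)u)$, $w_s(u,v):=\nabla g(\bar x)s+\tfrac12\nabla^2g(\bar x)[u,u]-v$. Then: (i) For each $s\in\mathbb X$, $\nabla g(\bar x)^*y^*=0$, $\nabla^2\langle y^*,g\rangle(\bar x)(u)+\nabla g(\bar x)^*z^*=0$, $y^*\in\mathcal N_{\mathbf T(u)}(w_s(u,0))$, $z^*\in\mathcal T_{\mathcal N_{\mathbf T(u)}(w_s(u,0))}(y^* )$ imply $y^*=0$; and for all $x^*,s\in\mathbb X$, $y^*,z^*,v\in\mathbb R^m$ with $\langle y^*,v\rangle\ge0$, $x^*=\nabla^2\langle y^*,g\rangle(\bar x)(u)+\nabla g(\bar x)^*z^*$, $y^*\in\mathcal N_{\mathbf T(u)}(w_s(u,v))\cap\ker\nabla g(\bar x)^*$, $z^*\in\mathcal T_{\mathcal N_{\mathbf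 T(u)}(w_s(u,v))}(y^* )$, there is $\lambda\in K$ with $x^*=\nabla g(\bar x)^*\lambda$. (ii) $\nabla g(\bar x)^*y^*=0$, $\nabla^2\langle y^*,g\rangle(\bar x)(u)+\nabla g(\bar x)^*z^*=0$, $y^*\in K$, $z^*\in\mathcal T_K(y^* )$ imply $y^*=0$; and for all $x^*\in\mathbb X$ with $\langle x^*,u\rangle\ge0$ and $y^*,z^*\in\mathbb R^m$ with $x^*=\nabla^2\langle y^*,g\rangle(\bar x)(u)+\nabla g(\bar x)^*z^*$, $y^*\in K\cap\ker\nabla g(\bar x)^*$, $z^*\in\mathcal T_K(y^* )$, there is $\lambda\in K$ (hence $\lambda\in\mathcal N_D(g(\bar x))$) with $x^*=\nabla g(\bar x)^*\lambda$.
   Context: $D$ polyhedral locally around $y$: $D\cap V$ is a finite union of convex polyhedra for some neighbourhood $V$ of $y$. $\mathcal T_Q$ Bouligand tangent cone, $\mathcal N_Q$ limiting normal cone, $\mathcal N_D(y;w)$ directional limiting normal cone (limits of $\eta_k\in\widehat{\mathcal N}_D(y+t_kw_k)$ with $w_k\to w$, $t_k\searrow0$). $\nabla^2\langle y^*,g\rangle(\bar x)$ Hessian of $x\mapsto\langle y^*,g(x)\rangle$; $\nabla^2\langle y^*,g\rangle(\bar x)[u,u]=\langle u,\nabla^2\langle y^*,g\rangle(\bar x)u\rangle$; $\nabla^2g(\bar x)[u,u]=\sum_i\langle u,\nabla^2\langle e_i,g\rangle(\bar x)u\rangle e_i$. *)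

From HB Require Import structures.
From mathcomp Require Import all_boot all_order all_algebra.
From mathcomp Require Import all_classical all_reals all_analysis.
Set Implicit Arguments. Unset Strict Implicit. Unset Printing Implicit Defensive.
Import Order.TTheory GRing.Theory Num.Theory.
Import numFieldNormedType.Exports.
Local Open Scope classical_set_scope.
Local Open Scope ring_scope.

Section Defs.
Variable R : realType.

Definition dotv (k : nat) (a b : 'rV[R]_k) : R := \sum_(i < k) a 0 i * b 0 i.

Definition ebasis (k : nat) (j : 'I_k) : 'rV[R]_k := delta_mx 0 j.

Definition tangent_cone (k : nat) (Q : set 'rV[R]_k) (x : 'rV[R]_k) : set 'rV[R]_k :=
  [set w | exists (t : nat -> R) (wk : nat -> 'rV[R]_k),
      [/\ (forall i, 0 < t i), t @ \oo --> (0:R), wk @ \oo --> w &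
          forall i, Q (x + t i *: wk i)]].

(* regular (Frechet) normal cone; empty outside Q *)
Definition reg_normal (k : nat) (Q : set 'rV[R]_k) (x : 'rV[R]_k) : set 'rV[R]_k :=
  [set eta | Q x /\ forall eps : R, 0 < eps ->
      \forall x' \near x, Q x' -> dotv eta (x' - x) <= eps * `|x' - x|].

(* limiting (Mordukhovich) normal cone; empty outside Q *)
Definition lim_normal (k : nat) (Q : set 'rV[R]_k) (x : 'rV[R]_k) : set 'rV[R]_k :=
  [set eta | Q x /\ exists (xk etak : nat -> 'rV[R]_k),
      [/\ (forall i, Q (xk i)), xk @ \oo --> x, etak @ \oo --> eta &
          forall i, reg_normal Q (xk i) (etak i)]].

Definition dir_normal (k : nat) (Q : set 'rV[R]_k) (x w : 'rV[R]_k) : set 'rV[R]_k :=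
  [set eta | exists (t : nat -> R) (wk etak : nat -> 'rV[R]_k),
      [/\ (forall i, 0 < t i), t @ \oo --> (0:R), wk @ \oo --> w,
          etak @ \oo --> eta &
          forall i, reg_normal Q (x + t i *: wk i) (etak i)]].

Definition polyhedron (k : nat) (P : set 'rV[R]_k) : Prop :=
  exists (p : nat) (a : 'I_p -> 'rV[R]_k) (b : 'I_p -> R),
    P = [set z | forall i, dotv (a i) z <= b i].

Definition locally_polyhedral (k : nat) (D : set 'rV[R]_k) (y : 'rV[R]_k) : Prop :=
  exists V : set 'rV[R]_k, nbhs y V /\
    exists (q : nat) (P : 'I_q -> set 'rV[R]_k),
      (forall i, polyhedron (P i)) /\ D `&` V = \bigcup_(i in [set: 'I_q]) P i.

Definition C2 (n m : nat) (g : 'rV[R]_n -> 'rV[R]_m) : Prop :=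
  [/\ (forall x, differentiable g x),
      (forall v x, differentiable ('D_v g) x) &
      (forall v w, continuous ('D_w ('D_v g)))].

Definition jac (n m : nat) (g : 'rV[R]_n -> 'rV[R]_m) (xb s : 'rV[R]_n) : 'rV[R]_m :=
  'D_s g xb.

Definition jacT (n m : nat) (g : 'rV[R]_n -> 'rV[R]_m) (xb : 'rV[R]_n) (y : 'rV[R]_m)
  : 'rV[R]_n := \row_j dotv y ('D_(ebasis j) g xb).

Definition scal (n m : nat) (g : 'rV[R]_n -> 'rV[R]_m) (y : 'rV[R]_m) : 'rV[R]_n -> R :=
  fun x => dotv y (g x).

Definition hessv (n m : nat) (g : 'rV[R]_n -> 'rV[R]_m) (xb : 'rV[R]_n) (y : 'rV[R]_m)
  (u : 'rV[R]_n) : 'rV[R]_n := \row_j 'D_(ebasis j) ('D_u (scal g y)) xb.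

Definition hessq (n m : nat) (g : 'rV[R]_n -> 'rV[R]_m) (xb : 'rV[R]_n) (y : 'rV[R]_m)
  (u : 'rV[R]_n) : R := 'D_u ('D_u (scal g y)) xb.

Definition hessg (n m : nat) (g : 'rV[R]_n -> 'rV[R]_m) (xb u : 'rV[R]_n) : 'rV[R]_m :=
  \row_i hessq g xb (ebasis i) u.

Definition wsv (n m : nat) (g : 'rV[R]_n -> 'rV[R]_m) (xb s u : 'rV[R]_n) (v : 'rV[R]_m)
  : 'rV[R]_m := jac g xb s + 2^-1 *: hessg g xb u - v.

End Defs.

From HB Require Import structures.
From mathcomp Require Import all_boot all_order all_algebra.
From mathcomp Require Import all_classical all_reals all_analysis.
From mathcomp Require Import lra.
Import Order.TTheory GRing.Theory Num.Theory.
Import numFieldNormedType.Exports.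
Local Open Scope classical_set_scope.
Local Open Scope ring_scope.
Set Implicit Arguments. Unset Strict Implicit. Unset Printing Implicit Defensive.

(* Since D is polyhedral near y := g xb, it coincides near y with y + T_D, and T_D
   is a finite union of polyhedral cones, hence again polyhedral near each of its
   points.  Consequently every limiting normal to a tangent cone of T_D lies in
   K = N_{T_D}(∇g u), and K lies in the directional normal cone N_D(y; ∇g u) of
   SOSCMS(u).  Normals to a cone at a point w are orthogonal to w, so K, and every
   tangent direction z to K, is orthogonal to ∇g u.  Pairing the multiplier
   equation x* = ∇²<y*,g> u + ∇g^* z* with u therefore gives
   ∇²<y*,g>[u,u] = <x*,u> >= 0 (resp. = 2 <y*,v> >= 0 in (i), from y* ⊥ w_s(u,v)),
   so SOSCMS(u) forces y* = 0; then x* = ∇g^* z* with z* ∈ T_K(0) = K. *)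

Section InnerProduct.
Variables (R : realType) (k : nat).
Implicit Types a b c : 'rV[R]_k.

Lemma dotvC a b : dotv a b = dotv b a.
Proof. by apply: eq_bigr => i _; rewrite mulrC. Qed.

Lemma dotvDr a b c : dotv a (b + c) = dotv a b + dotv a c.
Proof. by rewrite /dotv -big_split; apply: eq_bigr => i _; rewrite mxE mulrDr. Qed.

Lemma dotvZr a (t : R) b : dotv a (t *: b) = t * dotv a b.
Proof. by rewrite /dotv mulr_sumr; apply: eq_bigr => i _; rewrite mxE mulrCA. Qed.

Lemma dotvNr a b : dotv a (- b) = - dotv a b.
Proof. by rewrite -scaleN1r dotvZr mulN1r. Qed.

Lemma dotvBr a b c : dotv a (b - c) = dotv a b - dotv a c.
Proof. by rewrite dotvDr dotvNr. Qed.

Lemma dotv0r a : dotv a 0 = 0.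
Proof. by rewrite -(scale0r 0) dotvZr mul0r. Qed.

Lemma dotv0l a : dotv 0 a = 0.
Proof. by rewrite dotvC dotv0r. Qed.

Lemma dotvDl a b c : dotv (b + c) a = dotv b a + dotv c a.
Proof. by rewrite dotvC dotvDr !(dotvC a). Qed.

Lemma dotvZl a (t : R) b : dotv (t *: b) a = t * dotv b a.
Proof. by rewrite dotvC dotvZr dotvC. Qed.

Lemma dotv_sumr a (I : finType) (f : I -> 'rV[R]_k) :
  dotv a (\sum_i f i) = \sum_i dotv a (f i).
Proof.
rewrite /dotv; under eq_bigr do rewrite summxE mulr_sumr.
by rewrite exchange_big.
Qed.

Lemma dotv_ebasis (j : 'I_k) a : dotv (ebasis R j) a = a 0 j.
Proof.
rewrite /dotv (bigD1 j) //= big1 ?addr0; first by rewrite /ebasis mxE !eqxx mul1r.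
by move=> i /negbTE ij; rewrite /ebasis mxE ij andbF mul0r.
Qed.

Lemma cvg_dotv {T} (F : set_system T) {FF : Filter F} (f h : T -> 'rV[R]_k) a b :
  f @ F --> a -> h @ F --> b -> (fun t => dotv (f t) (h t)) @ F --> dotv a b.
Proof.
move=> fa hb; rewrite /dotv.
apply: (@cvg_big R 'I_k +%R 0 xpredT _ T F _ (fun i t => f t 0 i * h t 0 i)) => [|i _].
  exact: add_continuous.
by apply: cvgM; apply: (continuous_cvg _ (@coord_continuous R 1 k 0 i _)).
Qed.

Lemma dotv_continuous a : continuous (dotv a).
Proof. by move=> x; apply: (cvg_dotv (F := nbhs x) (f := fun=> a) (h := id)); [exact: cvg_cst | exact: cvg_id]. Qed.

End InnerProduct.

Section SecondOrderCalculus.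
Variable R : realType.

Lemma derive_dotv (n m : nat) (f : 'rV[R]_n -> 'rV[R]_m) (y : 'rV[R]_m) x v :
  derivable f x v -> 'D_v (fun z => dotv y (f z)) x = dotv y ('D_v f x).
Proof.
move=> fv; apply: cvg_lim => //.
have -> : (fun h : R => h^-1 *: (((fun z => dotv y (f z)) \o shift x) (h *: v) - dotv y (f x)))
  = (fun h : R => dotv y (h^-1 *: ((f \o shift x) (h *: v) - f x))).
  by apply: funext => h; rewrite dotvZr dotvBr.
exact: (cvg_dotv (f := fun=> y) (cvg_cst y) fv).
Qed.

Lemma derive_ebasis_sum (n m : nat) (f : 'rV[R]_n -> 'rV[R]_m) x v :
  differentiable f x -> 'D_v f x = \sum_j v 0 j *: 'D_(ebasis R j) f x.
Proof.
move=> df; rewrite deriveE //.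
under eq_bigr do rewrite deriveE //.
by rewrite {1}(row_sum_delta v) linear_sum; apply: eq_bigr => j _; rewrite linearZ.
Qed.

Variables (n m : nat) (g : 'rV[R]_n -> 'rV[R]_m) (xb : 'rV[R]_n).
Hypothesis g_C2 : C2 g.

Let g_differentiable x : differentiable g x. Proof. by case: g_C2. Qed.
Let Dg_differentiable v x : differentiable ('D_v g) x. Proof. by case: g_C2. Qed.

Lemma derive_scal y v : 'D_v (scal g y) = (fun x => dotv y ('D_v g x)).
Proof. by apply: funext => x; rewrite derive_dotv //; apply: diff_derivable. Qed.

Lemma hessv_coord y v j : hessv g xb y v 0 j = dotv y ('D_(ebasis R j) ('D_v g) xb).
Proof. by rewrite mxE derive_scal derive_dotv //; apply: diff_derivable. Qed.

Lemma hessqE y v : hessq g xb y v = dotv y ('D_v ('D_v g) xb).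
Proof. by rewrite /hessq derive_scal derive_dotv //; apply: diff_derivable. Qed.

Lemma dotv_jacT y s : dotv (jacT g xb y) s = dotv y (jac g xb s).
Proof.
rewrite /jac (derive_ebasis_sum _ (g_differentiable xb)) dotv_sumr.
by apply: eq_bigr => j _; rewrite mxE dotvZr mulrC.
Qed.

Lemma dotv_hessv y v : dotv (hessv g xb y v) v = hessq g xb y v.
Proof.
rewrite hessqE (derive_ebasis_sum _ (Dg_differentiable v xb)) dotv_sumr.
by apply: eq_bigr => j _; rewrite hessv_coord dotvZr mulrC.
Qed.

Lemma dotv_hessg y v : dotv y (hessg g xb v) = hessq g xb y v.
Proof.
rewrite hessqE; apply: eq_bigr => i _.
by rewrite /hessg mxE hessqE dotv_ebasis.
Qed.

Lemma hessv0 v : hessv g xb 0 v = 0.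
Proof. by apply/rowP => j; rewrite hessv_coord dotv0l mxE. Qed.

End SecondOrderCalculus.

Section Cones.
Variables (R : realType) (k : nat).
Local Notation V := 'rV[R]_k.

Definition is_cone (C : set V) := forall (t : R) x, 0 < t -> C x -> C (t *: x).

Lemma cvg_scale0 (t : nat -> R) (w : nat -> V) (w0 : V) :
  t @ \oo --> (0 : R) -> w @ \oo --> w0 -> (fun i => t i *: w i) @ \oo --> (0 : V).
Proof. by move=> t0 ww; rewrite -(scale0r w0); exact: cvgZ. Qed.

Lemma cvg_eq0 (u : nat -> R) (l : R) : u @ \oo --> l -> (forall i, u i = 0) -> l = 0.
Proof.
move=> + u0; have -> : u = fun=> 0 by apply: funext.
by move=> /cvg_lim <- //; rewrite lim_cst.
Qed.

Lemma tangent_cone_is_cone (Q : set V) x : is_cone (tangent_cone Q x).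
Proof.
move=> t w t0 [tt [wk [tt0 ttc wkc Qi]]].
exists (fun i => tt i / t), (fun i => t *: wk i); split.
- by move=> i; apply: divr_gt0.
- by rewrite -(mul0r t^-1); apply: cvgM => //; exact: cvg_cst.
- by apply: cvgZ => //; exact: cvg_cst.
- by move=> i; rewrite scalerA mulrAC -mulrA mulfV ?mulr1 ?gt_eqF.
Qed.

Lemma reg_normal_is_cone (Q : set V) x : is_cone (reg_normal Q x).
Proof.
move=> t e t0 [Qx He]; split => // eps eps0.
apply: filterS (He (eps / t) (divr_gt0 eps0 t0)) => y Hy /Hy le_eps.
have -> : eps * `|y - x| = t * (eps / t * `|y - x|).
  by rewrite mulrA mulrCA mulfV ?mulr1 ?gt_eqF.
by rewrite dotvZl ler_pM2l.
Qed.

Lemma lim_normal_is_cone (Q : set V) x : is_cone (lim_normal Q x).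
Proof.
move=> t e t0 [Qx [xk [ek [Qk xc ec rk]]]]; split => //.
exists xk, (fun i => t *: ek i); split => //.
- by apply: cvgZ => //; exact: cvg_cst.
- by move=> i; apply: reg_normal_is_cone.
Qed.

Lemma dir_normal_lim_normal (Q : set V) x w : closed Q ->
  dir_normal Q x w `<=` lim_normal Q x.
Proof.
move=> clQ eta [t [wk [ek [t0 tc wc ec rk]]]].
have xc : (fun i => x + t i *: wk i) @ \oo --> x.
  rewrite -[X in _ --> X]addr0; apply: cvgD; first exact: cvg_cst.
  exact: cvg_scale0 tc wc.
split; first by apply: (closed_cvg _ clQ _ _ xc); apply: nearW => i; case: (rk i).
by exists (fun i => x + t i *: wk i), ek; split => // i; case: (rk i).
Qed.

Lemma tangent_cone_orth (S : set V) (d y z : V) :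
  (forall s, S s -> dotv s d = 0) -> S y -> tangent_cone S y z -> dotv z d = 0.
Proof.
move=> Sd Sy [t [wk [t0 tc wc Si]]].
apply: (cvg_eq0 (cvg_dotv wc (cvg_cst d))) => i.
have := Sd _ (Si i); rewrite dotvDl Sd // add0r dotvZl => /eqP.
by rewrite mulf_eq0 gt_eqF //= => /eqP.
Qed.

Lemma tangent_cone0 (S : set V) : is_cone S -> closed S -> tangent_cone S 0 `<=` S.
Proof.
move=> cS clS z [t [wk [t0 tc wc Si]]].
apply: (closed_cvg _ clS _ _ wc); apply: nearW => i.
have ti : 0 < (t i)^-1 by rewrite invr_gt0.
by have := cS _ _ ti (Si i); rewrite add0r scalerA mulVf ?scale1r // gt_eqF.
Qed.

Lemma reg_normal_cone_ray (Q : set V) x eta eps : is_cone Q -> reg_normal Q x eta ->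
  0 < eps -> exists2 d : R, 0 < d &
    forall s, `|s| < d -> s * dotv eta x <= eps * (`|s| * `|x|).
Proof.
move=> cQ [Qx He] eps0.
(* test the defining inequality along the ray [(1 + s) x], which stays in the cone [Q] *)
have ray : (fun s : R => (1 + s) *: x) @ (0 : R) --> x.
  rewrite -[X in _ --> X]scale1r; apply: cvgZ; last exact: cvg_cst.
  by rewrite -[X in _ --> X]addr0; apply: cvgD; [exact: cvg_cst | exact: cvg_id].
have small : \forall s \near (0 : R), `|s| < 1.
  apply: filterS (@cvgr_dist_lt _ R^o _ (nbhs (0 : R^o)) _ id 0 cvg_id _ ltr01) => s.
  by rewrite sub0r normrN.
have near_ray : \forall s \near (0 : R), Q ((1 + s) *: x) ->
    dotv eta ((1 + s) *: x - x) <= eps * `|(1 + s) *: x - x| := ray _ (He eps eps0).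
have [d d0 Hd] := (nbhs_normP _ _).1 (filterI near_ray small).
exists d => // s sd; have [] := Hd s; first by rewrite /= sub0r normrN.
move=> /= Hs s1; have Q1 : Q ((1 + s) *: x).
  by apply: cQ => //; move: s1; rewrite ltr_norml; lra.
by have := Hs Q1; rewrite scalerDl scale1r addrAC subrr add0r dotvZr normrZ.
Qed.

Lemma reg_normal_cone_orth (Q : set V) x eta : is_cone Q -> reg_normal Q x eta ->
  dotv eta x = 0.
Proof.
move=> cQ xeta.
suff bound eps : 0 < eps -> `|dotv eta x| <= eps * `|x|.
  apply/eqP; rewrite -normr_le0; apply/ler_addgt0Pr => e e0; rewrite add0r.
  have x1 : 0 < `|x| + 1 by rewrite ltr_wpDl.
  apply: (le_trans (bound _ (divr_gt0 e0 x1))).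
  rewrite mulrAC ler_pdivrMr // ler_pM2l //; lra.
move=> eps0; have [d d0 Hd] := reg_normal_cone_ray cQ xeta eps0.
have hd2 : `|d / 2| < d by rewrite gtr0_norm ?divr_gt0 //; lra.
have d2 : 0 < d / 2 by rewrite divr_gt0.
have le_pos := Hd _ hd2.
have le_neg : - (d / 2) * dotv eta x <= eps * (`|- (d / 2)| * `|x|).
  by apply: Hd; rewrite normrN.
rewrite normrN gtr0_norm // in le_pos le_neg.
rewrite mulNr -mulrN mulrCA ler_pM2l // in le_neg.
rewrite mulrCA ler_pM2l // in le_pos.
by rewrite ler_norml le_pos andbT lerNl.
Qed.

Lemma lim_normal_cone_orth (Q : set V) w eta : is_cone Q -> lim_normal Q w eta ->
  dotv eta w = 0.
Proof.
move=> cQ [Qw [xk [ek [Qk xc ec rk]]]].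
by apply: (cvg_eq0 (cvg_dotv ec xc)) => i; apply: reg_normal_cone_orth (rk i).
Qed.

Lemma cvg_natSinv (f : nat -> V) (l : V) (c : R) : 0 < c ->
  (forall N, `|l - f N| < c * N.+1%:R^-1) -> f @ \oo --> l.
Proof.
move=> c0 H; apply/cvgrPdist_lt => e e0.
apply: filterS (@near_infty_natSinv_lt R (PosNum (divr_gt0 e0 c0))) => N /= HN.
by apply: (lt_trans (H N)); rewrite -ltr_pdivlMl // mulrC.
Qed.

Lemma closure_lim_normal_approx (Q : set V) x z (N : nat) :
  closure (lim_normal Q x) z -> exists p : V * V,
    [/\ reg_normal Q p.1 p.2, `|x - p.1| < N.+1%:R^-1 & `|z - p.2| < 2 * N.+1%:R^-1].
Proof.
have N0 : 0 < N.+1%:R^-1 :> R by rewrite invr_gt0 ltr0n.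
move=> /(_ _ (@cvgr_dist_lt _ _ _ (nbhs z) _ id z cvg_id _ N0)).
move=> [eta [[_ [xk [ek [_ xc ec rk]]]] /= eta_z]].
have near_eta : \forall j \near \oo,
    `|x - xk j| < N.+1%:R^-1 /\ `|eta - ek j| < N.+1%:R^-1.
  by apply: filterI; [exact: (@cvgr_dist_lt _ _ _ _ _ xk x xc _ N0)
                   | exact: (@cvgr_dist_lt _ _ _ _ _ ek eta ec _ N0)].
have [j [xj ej]] := filter_ex near_eta.
exists (xk j, ek j); split => //=.
apply: (le_lt_trans (ler_distD eta z (ek j))).
by rewrite mulr_natl mulr2n ltrD.
Qed.

Lemma lim_normal_closed (Q : set V) x : closed (lim_normal Q x).
Proof.
move=> z zcl; have [eta [[Qx _] _]] := zcl _ filterT.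
have [f Hf] := choice (fun N => closure_lim_normal_approx N zcl).
split => //; exists (fun N => (f N).1), (fun N => (f N).2); split.
- by move=> N; case: (Hf N) => [[]].
- by apply: (@cvg_natSinv _ _ 1 ltr01) => N; rewrite mul1r; case: (Hf N).
- by apply: (@cvg_natSinv _ _ 2) => // N; case: (Hf N).
- by move=> N; case: (Hf N).
Qed.

End Cones.

Section LocallyPolyhedral.
Variables (R : realType) (k : nat).
Local Notation V := 'rV[R]_k.

Definition polyhedral_set (T : set V) := exists q (P : 'I_q -> set V),
  (forall i, polyhedron (P i)) /\ T = \bigcup_(i in [set: 'I_q]) P i.

Definition locally_conic (C T : set V) (c : V) :=
  \forall x \near c, (C x <-> T (x - c)).

Lemma near_dotv_lt (a c : V) (b : R) : dotv a c < b -> \forall y \near c, dotv a y < b.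
Proof.
move=> ac; have e0 : 0 < b - dotv a c by rewrite subr_gt0.
apply: filterS (@cvgr_dist_lt _ R^o _ (nbhs c) _ (dotv a) _ (@dotv_continuous R k a c) _ e0) => y.
by rewrite ltr_norml => /andP[h _]; lra.
Qed.

Lemma near_dotv_gt (a c : V) (b : R) : b < dotv a c -> \forall y \near c, b < dotv a y.
Proof.
move=> ac; have e0 : 0 < dotv a c - b by rewrite subr_gt0.
apply: filterS (@cvgr_dist_lt _ R^o _ (nbhs c) _ (dotv a) _ (@dotv_continuous R k a c) _ e0) => y.
by rewrite ltr_norml => /andP[_ h]; lra.
Qed.

Lemma polyhedron_closed (P : set V) : polyhedron P -> closed P.
Proof.
move=> [p [a [b ->]]] z zcl i; rewrite leNgt; apply/negP => /near_dotv_gt near_z.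
by have [y [/(_ i) + /= lt_y]] := zcl _ near_z; rewrite leNgt lt_y.
Qed.

Lemma polyhedral_set_closed (T : set V) : polyhedral_set T -> closed T.
Proof.
move=> [q [P [hP ->]]]; apply: closed_bigcup; first exact: finite_finset.
by move=> i _; apply: polyhedron_closed.
Qed.

Lemma polyhedron_set0 : polyhedron (set0 : set V).
Proof.
exists 1%N, (fun=> 0), (fun=> -1); apply/seteqP; split => // z /(_ ord0).
by rewrite dotv0l ler0N1.
Qed.

Lemma polyhedron_local_cone (P : set V) (c : V) : polyhedron P ->
  exists T, [/\ polyhedron T, is_cone T & locally_conic P T c].
Proof.
move=> [p [a [b ->]]].
have [Pc | /existsNP[i0 /negP]] := pselect (forall i, dotv (a i) c <= b i); last first.
  rewrite -ltNge => /near_dotv_gt near_out.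
  exists set0; split; [exact: polyhedron_set0 | by [] |].
  by apply: filterS near_out => x lt_x; split=> // /(_ i0); rewrite leNgt lt_x.
(* constraints inactive at [c] become the trivial constraint [0 <= 0] *)
pose a' i := if dotv (a i) c == b i then a i else 0.
exists [set w | forall i, dotv (a' i) w <= 0]; split.
- by exists p, a', (fun=> 0).
- by move=> t w t0 Hw i; rewrite dotvZr pmulr_rle0.
have near_inactive (i : 'I_p) :
    \forall x \near c, dotv (a i) c != b i -> dotv (a i) x < b i.
  have [e | ne] := eqVneq (dotv (a i) c) (b i); first by near=> x.
  have lt : dotv (a i) c < b i by rewrite lt_neqAle ne Pc.
  by apply: filterS (near_dotv_lt lt) => x h _.
apply: filterS (@filter_forall _ _ _ _ _ near_inactive) => x Hx.
split => H i; move: (H i); rewrite /a'; case: eqP => [e | /eqP ne].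
- by rewrite dotvBr e subr_le0.
- by rewrite dotv0l.
- by rewrite dotvBr e subr_le0.
- by move=> _; apply/ltW/Hx.
Unshelve. all: by end_near.
Qed.

Lemma locally_polyhedral_local_cone (C : set V) (c : V) : locally_polyhedral C c ->
  exists T, [/\ polyhedral_set T, is_cone T & locally_conic C T c].
Proof.
move=> [W [nW [q [P [hP eqP]]]]].
have [Tf HT] := choice (fun i => polyhedron_local_cone c (hP i)).
exists (\bigcup_(i in [set: 'I_q]) Tf i); split.
- by exists q, Tf; split => // i; case: (HT i).
- by move=> t w t0 [i _ Ti]; exists i => //; case: (HT i) => _ + _; apply.
have near_all : \forall x \near c, forall i, (P i x <-> Tf i (x - c)).
  by apply: (@filter_forall _ _ (fun i x => P i x <-> Tf i (x - c)) (nbhs c) _)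
    => i; case: (HT i).
apply: filterS (filterI nW near_all) => x [Wx Hx].
have CW : (C `&` W) x <-> (\bigcup_(i in [set: 'I_q]) P i) x by rewrite eqP.
split => [Cx | [i _ Ti]].
- by have [i _ Pi] := CW.1 (conj Cx Wx); exists i => //; apply/Hx.
- by have [] : (C `&` W) x by apply/CW; exists i => //; apply/Hx.
Qed.

(* step sizes with [tseq r w i *: w] inside the ball of radius [r], tending to 0 *)
Definition tseq (r : R) (w : V) (i : nat) : R := r / (`|w| + 1) / i.+1%:R.

Lemma tseq_gt0 r w i : 0 < r -> 0 < tseq r w i.
Proof. by move=> r0; rewrite /tseq !divr_gt0 // ltr_wpDl. Qed.

Lemma cvg_tseq r (w : nat -> V) : 0 < r -> (fun i => tseq r (w i) i) @ \oo --> (0 : R).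
Proof.
move=> r0; apply/(@cvgrPdist_lt _ R^o) => e e0.
apply: filterS (@near_infty_natSinv_lt R (PosNum (divr_gt0 e0 r0))) => N /= HN.
rewrite sub0r normrN gtr0_norm ?tseq_gt0 //.
apply: (@le_lt_trans _ _ (r / N.+1%:R)); last by rewrite -ltr_pdivlMl // mulrC.
rewrite /tseq ler_pM2r ?invr_gt0 ?ltr0n // ler_pdivrMr ?ltr_wpDl //.
by rewrite ler_peMr ?lerDr // ltW.
Qed.

Lemma tseq_small r w i : 0 < r -> `|tseq r w i *: w| < r.
Proof.
move=> r0; rewrite normrZ gtr0_norm ?tseq_gt0 //.
have w1 : 0 < `|w| + 1 by rewrite ltr_wpDl.
apply: (@le_lt_trans _ _ (r / (`|w| + 1) * `|w|)).
  rewrite ler_wpM2r // /tseq ler_pdivrMr ?ltr0n // ler_peMr ?ler1n //.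
  by rewrite divr_ge0 // ltW.
by rewrite mulrAC ltr_pdivrMr // ltr_pM2l //; lra.
Qed.

Lemma tangent_cone_locally_conic (C T : set V) (c : V) : is_cone T -> closed T ->
  locally_conic C T c -> tangent_cone C c = T.
Proof.
move=> cT clT /(nbhs_normP _ _) [r r0 Hr].
have shiftK v : c + v - c = v by rewrite addrC addKr.
have dist_shift v : `|c - (c + v)| = `|v| by rewrite opprD addrA subrr add0r normrN.
apply/seteqP; split => [w [t [wk [t0 tc wc Ci]]] | w Tw].
  have sc := cvg_scale0 tc wc.
  apply: (closed_cvg _ clT _ _ wc).
  apply: filterS (@cvgr_dist_lt _ _ _ _ _ _ _ sc _ r0) => i hi.
  have Ti : T (t i *: wk i).
    rewrite -[X in T X](shiftK (t i *: wk i)); apply/(Hr _ _).1/Ci.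
    by rewrite /= dist_shift -normrN -sub0r.
  have ti : 0 < (t i)^-1 by rewrite invr_gt0.
  by have := cT _ _ ti Ti; rewrite scalerA mulVf ?scale1r // gt_eqF.
exists (tseq r w), (fun=> w); split.
- by move=> i; apply: tseq_gt0.
- exact: cvg_tseq.
- exact: cvg_cst.
- move=> i; apply/(Hr _ _).2; first by rewrite /= dist_shift tseq_small.
  by rewrite shiftK; apply: cT => //; apply: tseq_gt0.
Qed.

Lemma reg_normal_locally_conic (C T : set V) (c : V) (r t : R) x eta : is_cone T ->
  (forall y, `|c - y| < r -> (C y <-> T (y - c))) -> 0 < t -> `|t *: x| < r ->
  reg_normal T x eta -> reg_normal C (c + t *: x) eta.
Proof.
move=> cT Hr t0 txr [Tx He].
have t0' : t != 0 by rewrite gt_eqF.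
have ti : 0 < t^-1 by rewrite invr_gt0.
have CT y : `|c - y| < r -> C y -> T (t^-1 *: (y - c)) by move=> /Hr cy /cy /cT; apply.
split.
  by apply/Hr; rewrite ?opprD ?addrA ?subrr ?add0r ?normrN // addrC addKr; apply: cT.
move=> eps e0; pose h y := t^-1 *: (y - c).
have h_sub y : h y - x = t^-1 *: (y - (c + t *: x)).
  by rewrite /h opprD addrA [RHS]scalerBr scalerA mulVf // scale1r.
have hc : h @ (c + t *: x) --> x.
  apply/(@cvgrPdist_lt _ _ _ (nbhs (c + t *: x)) _ h x) => e' e'0.
  apply: filterS (@cvgr_dist_lt _ _ _ (nbhs _) _ id _ cvg_id _ (mulr_gt0 t0 e'0)) => y.
  move=> lt_y; rewrite [`|x - _|]distrC h_sub normrZ gtr0_norm // mulrC.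
  by rewrite ltr_pdivrMr // (mulrC e') distrC.
have r1 : 0 < r - `|t *: x| by rewrite subr_gt0.
have near_h : \forall y \near c + t *: x,
    T (h y) -> dotv eta (h y - x) <= eps * `|h y - x| := hc _ (He eps e0).
have near_r : \forall y \near c + t *: x, `|c + t *: x - y| < r - `|t *: x|.
  exact: (@cvgr_dist_lt _ _ _ (nbhs (c + t *: x)) _ id (c + t *: x) cvg_id _ r1).
apply: filterS (filterI near_h near_r) => y [Hy1 Hy2] Cy.
have cy : `|c - y| < r.
  apply: (le_lt_trans (ler_distD (c + t *: x) c y)).
  by rewrite opprD addrA subrr add0r normrN -ltrBrDl.
have := Hy1 (CT y cy Cy); rewrite h_sub dotvZr normrZ gtr0_norm //.
by rewrite mulrCA ler_pM2l.
Qed.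

Lemma lim_normal_locally_conic (C T : set V) (c w : V) : is_cone T ->
  locally_conic C T c -> lim_normal T w `<=` dir_normal C c w.
Proof.
move=> cT /(nbhs_normP _ _) [r r0 Hr] eta [Tw [xs [es [Ts xc ec rk]]]].
exists (fun i => tseq r (xs i) i), xs, es; split => //.
- by move=> i; apply: tseq_gt0.
- exact: cvg_tseq.
- move=> i; apply: (reg_normal_locally_conic cT Hr (tseq_gt0 _ _ r0)).
    exact: tseq_small.
  exact: rk.
Qed.
Lemma locally_polyhedral_tangent_cone (D : set V) y : locally_polyhedral D y ->
  polyhedral_set (tangent_cone D y) /\ locally_conic D (tangent_cone D y) y.
Proof.
move=> /locally_polyhedral_local_cone [T [pT cT DT]].
by rewrite (tangent_cone_locally_conic cT (polyhedral_set_closed pT) DT).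
Qed.

Lemma polyhedral_set_locally_polyhedral (T : set V) x : polyhedral_set T ->
  locally_polyhedral T x.
Proof. by move=> pT; exists setT; split; [exact: filterT | rewrite setIT]. Qed.

Lemma lim_normal_tangent_cone_dir_normal (D : set V) y w : locally_polyhedral D y ->
  lim_normal (tangent_cone D y) w `<=` dir_normal D y w.
Proof.
move=> /locally_polyhedral_tangent_cone [_ DT].
by apply: (lim_normal_locally_conic _ DT); exact: tangent_cone_is_cone.
Qed.

End LocallyPolyhedral.

Section SOSCMS.
Variables (R : realType) (n m : nat) (g : 'rV[R]_n -> 'rV[R]_m) (D : set 'rV[R]_m).
Variables (xb u : 'rV[R]_n).
Hypotheses (g_C2 : C2 g) (D_closed : closed D) (D_lpoly : locally_polyhedral D (g xb)).
Hypothesis soscms : forall y, dir_normal D (g xb) (jac g xb u) y ->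
  jacT g xb y = 0 -> 0 <= hessq g xb y u -> y = 0.

Local Notation TD := (tangent_cone D (g xb)).
Local Notation K := (lim_normal TD (jac g xb u)).
Local Notation Tu := (tangent_cone TD (jac g xb u)).

Lemma K_sub_dir_normal : K `<=` dir_normal D (g xb) (jac g xb u).
Proof. exact: lim_normal_tangent_cone_dir_normal. Qed.

Lemma K_sub_lim_normal : K `<=` lim_normal D (g xb).
Proof. by move=> y /K_sub_dir_normal; apply: dir_normal_lim_normal. Qed.

Lemma lim_normal_Tu_sub_K w : lim_normal Tu w `<=` K.
Proof.
have [TD_poly _] := locally_polyhedral_tangent_cone D_lpoly.
move=> y /(lim_normal_tangent_cone_dir_normal (polyhedral_set_locally_polyhedral _ TD_poly)).
by apply: dir_normal_lim_normal; apply: polyhedral_set_closed.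
Qed.

Lemma K_orth y : K y -> dotv y (jac g xb u) = 0.
Proof. by apply: lim_normal_cone_orth; apply: tangent_cone_is_cone. Qed.

Lemma tangent_K_orth (S : set 'rV[R]_m) y z : S `<=` K -> S y -> tangent_cone S y z ->
  dotv z (jac g xb u) = 0.
Proof. by move=> SK; apply: tangent_cone_orth => s /SK /K_orth. Qed.

Lemma soscms_multiplier_eq0 y z : K y -> jacT g xb y = 0 ->
  dotv z (jac g xb u) = 0 -> 0 <= dotv (hessv g xb y u + jacT g xb z) u -> y = 0.
Proof.
move=> Ky jy zu; rewrite dotvDl dotv_hessv // dotv_jacT // zu addr0.
exact: soscms (K_sub_dir_normal Ky) jy.
Qed.

Lemma soscms_normal_wsv s v y : lim_normal Tu (wsv g xb s u v) y ->
  jacT g xb y = 0 -> 0 <= dotv y v -> y = 0.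
Proof.
move=> Ny jy yv; apply: (soscms (K_sub_dir_normal (lim_normal_Tu_sub_K Ny)) jy).
have := lim_normal_cone_orth (@tangent_cone_is_cone _ _ TD _) Ny.
rewrite /wsv dotvBr dotvDr dotvZr dotv_hessg // -dotv_jacT // jy dotv0l add0r.
by lra.
Qed.

Lemma multiplier_in_cone (S : set 'rV[R]_m) xs z : is_cone S -> closed S ->
  tangent_cone S 0 z -> xs = hessv g xb 0 u + jacT g xb z ->
  S z /\ xs = jacT g xb z.
Proof.
by move=> cS clS Tz ->; rewrite hessv0 // add0r; split => //; apply: tangent_cone0 Tz.
Qed.

End SOSCMS.

Unset Implicit Arguments. Set Strict Implicit. Set Printing Implicit Defensive.

Theorem mainTheorem15 (R : realType) (n m : nat)
  (g : 'rV[R]_n -> 'rV[R]_m) (D : set 'rV[R]_m) (xb u : 'rV[R]_n) :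
  C2 g ->
  closed D ->
  locally_polyhedral D (g xb) ->
  D (g xb) ->
  dotv u u = 1 ->
  (forall y : 'rV[R]_m, dir_normal D (g xb) (jac g xb u) y ->
     jacT g xb y = 0 -> 0 <= hessq g xb y u -> y = 0) ->
  let TD := tangent_cone D (g xb) in
  let K := lim_normal TD (jac g xb u) in
  let Tu := tangent_cone TD (jac g xb u) in
  ((forall (s : 'rV[R]_n) (y z : 'rV[R]_m),
      jacT g xb y = 0 ->
      hessv g xb y u + jacT g xb z = 0 ->
      lim_normal Tu (wsv g xb s u 0) y ->
      tangent_cone (lim_normal Tu (wsv g xb s u 0)) y z ->
      y = 0) /\
   (forall (xs s : 'rV[R]_n) (y z v : 'rV[R]_m),
      0 <= dotv y v ->
      xs = hessv g xb y u + jacT g xb z ->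
      lim_normal Tu (wsv g xb s u v) y ->
      jacT g xb y = 0 ->
      tangent_cone (lim_normal Tu (wsv g xb s u v)) y z ->
      exists lam, K lam /\ xs = jacT g xb lam)) /\
  ((forall (y z : 'rV[R]_m),
      jacT g xb y = 0 ->
      hessv g xb y u + jacT g xb z = 0 ->
      K y ->
      tangent_cone K y z ->
      y = 0) /\
   (forall (xs : 'rV[R]_n), 0 <= dotv xs u ->
    forall (y z : 'rV[R]_m),
      xs = hessv g xb y u + jacT g xb z ->
      K y ->
      jacT g xb y = 0 ->
      tangent_cone K y z ->
      exists lam, [/\ K lam, lim_normal D (g xb) lam & xs = jacT g xb lam])).
Proof.
move=> g_C2 D_closed D_lpoly _ _ soscms TD K Tu.
have TuK w : lim_normal Tu w `<=` K by apply: lim_normal_Tu_sub_K.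
have y0_of := soscms_multiplier_eq0 g_C2 D_lpoly soscms.
split; split.
- move=> s y z jy hz Ny Tz; apply: (y0_of y z (TuK _ _ Ny) jy).
    exact: tangent_K_orth (TuK _) Ny Tz.
  by rewrite hz dotv0l.
- move=> xs s y z v yv exs Ny jy Tz.
  have y0 := soscms_normal_wsv g_C2 D_lpoly soscms Ny jy yv; subst y.
  have [Nz ->] := multiplier_in_cone g_C2 (lim_normal_is_cone (Q := Tu) (x := _))
    (lim_normal_closed (Q := Tu) (x := _)) Tz exs.
  by exists z; split => //; apply: TuK Nz.
- move=> y z jy hz Ky Tz; apply: (y0_of y z Ky jy).
    exact: tangent_K_orth (@subset_refl _ K) Ky Tz.
  by rewrite hz dotv0l.
- move=> xs xs_u y z exs Ky jy Tz.
  have zu : dotv z (jac g xb u) = 0 := tangent_K_orth (@subset_refl _ K) Ky Tz.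
  have y0 : y = 0 by apply: (y0_of y z Ky jy zu); rewrite -exs.
  subst y; have [Kz ->] := multiplier_in_cone g_C2 (lim_normal_is_cone (Q := TD) (x := _))
    (lim_normal_closed (Q := TD) (x := _)) Tz exs.
  by exists z; split => //; apply: K_sub_lim_normal Kz.
Qed.
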